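(* Let $G$ be a finite group, $k$ a field of characteristic $p>0$, and $P$ a Sylow $p$-subgroup of $G$. Then $\operatorname{ed}\Omega^{i}(kP\text{-mod})=\operatorname{ed}\Omega^{i}(kG\text{-mod})$ for each $i\in\mathbb N\cup\{\infty\}$.
   Context: $\Omega^0(\Lambda\text{-mod})=\Lambda\text{-mod}$; for $n\ge1$, $\Omega^n(\Lambda\text{-mod})$ is the full subcategory of finitely generated modules $K$ with an exact sequence $0\to K\to P^0\to\cdots\to P^{n-1}\to M\to0$, $P^j$ projective; $\Omega^\infty(\Lambda\text{-mod})$ is the full subcategory of modules $K$ with an exact sequence $0\to K\to P^0\to P^1\to\cdots$, $P^j$ projective. For subcategories $\mathcal T_1,\mathcal T_2$, $\mathcal T_1\bullet\mathcal T_2:=\operatorname{add}\{X\mid\exists$ exact $0\to T_1\to X\to T_2\to0$, $T_i\in\mathcal T_i\}$; $[T]_0=\{0\}$, $[T]_1=\operatorname{add}(T)$, $[T]_n=[T]_1\bullet[T]_{n-1}$; $\operatorname{ed}\mathcal C=\inf\{n\ge0\mid\mathcal C\subseteq[T]_{n+1}$ for some module $T\}$. *)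

From mathcomp Require Import all_boot all_order all_algebra all_fingroup all_solvable.
From mathcomp Require Import mxrepresentation.
From Stdlib Require Import ClassicalEpsilon.
Set Implicit Arguments. Unset Strict Implicit. Unset Printing Implicit Defensive.
Import GRing.Theory.
Local Open Scope ring_scope.

(* Finitely generated kG-modules: finite-dimensional matrix representations
   (row vectors, acting by right multiplication). *)
Record kmod (F : fieldType) (gT : finGroupType) (G : {group gT}) :=
  KMod { kdim : nat; krep : mx_representation F G kdim }.
Arguments KMod {F gT G} kdim krep.

Section Modules.
Variables (F : fieldType) (gT : finGroupType) (G : {group gT}).
Local Notation mod := (kmod F G).

Definition subcat := mod -> Prop.

Definition is_hom (M N : mod) (f : 'M[F]_(kdim M, kdim N)) : Prop :=
  forall x, x \in G -> krep M x *m f = f *m krep N x.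

Definition projective (P : mod) : Prop :=
  forall (M N : mod) (g : 'M[F]_(kdim M, kdim N)) (h : 'M[F]_(kdim P, kdim N)),
    is_hom g -> row_full g -> is_hom h ->
    exists l : 'M[F]_(kdim P, kdim M), is_hom l /\ l *m g = h.

(* add C : direct summands of finite direct sums  Y_0 (+) ... (+) Y_(m-1)
   of modules Y_j in C : X is such a summand iff there are homs
   f_j : X -> Y_j, g_j : Y_j -> X with sum_j f_j g_j = id_X. *)
Definition addC (C : subcat) : subcat := fun X =>
  exists m (Y : 'I_m -> mod)
    (f : forall j, 'M[F]_(kdim X, kdim (Y j)))
    (g : forall j, 'M[F]_(kdim (Y j), kdim X)),
    (forall j, [/\ C (Y j), is_hom (f j) & is_hom (g j)]) /\
    \sum_(j < m) (f j *m g j) = 1%:M.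

Definition short_exact (A X B : mod) (f : 'M[F]_(kdim A, kdim X))
  (g : 'M[F]_(kdim X, kdim B)) : Prop :=
  [/\ is_hom f, is_hom g, row_free f, row_full g & (f == kermx g)%MS].

Definition bullet (T1 T2 : subcat) : subcat :=
  addC (fun X => exists (A B : mod) f g,
           T1 A /\ T2 B /\ @short_exact A X B f g).

Definition zero_sub : subcat := fun X => kdim X = 0%N.

Fixpoint layer (T : mod) (n : nat) : subcat :=
  match n with
  | 0 => zero_sub
  | 1 => addC (fun Y => Y = T)
  | n'.+1 => bullet (addC (fun Y => Y = T)) (layer T n')
  end.

Definition complex_hom (X : nat -> mod)
  (d : forall j, 'M[F]_(kdim (X j), kdim (X j.+1))) : Prop :=
  forall j, is_hom (d j).

Inductive nat_inf := Fin of nat | Inf.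

(* For n >= 1:  K = X_0, P^j = X_(j+1) (j < n), M = X_(n+1),
   exact sequence 0 -> K -> P^0 -> ... -> P^(n-1) -> M -> 0.
   For i = Inf: 0 -> K = X_0 -> X_1 -> X_2 -> ... with all X_(j+1) projective. *)
Definition Omega (i : nat_inf) : subcat := fun K =>
  match i with
  | Fin 0 => True
  | Fin n => exists (X : nat -> mod) (d : forall j, 'M[F]_(kdim (X j), kdim (X j.+1))),
      [/\ X 0%N = K, complex_hom d, row_free (d 0%N),
          (forall j, (j < n)%N -> projective (X j.+1) /\ (d j == kermx (d j.+1))%MS)
        & row_full (d n)]
  | Inf => exists (X : nat -> mod) (d : forall j, 'M[F]_(kdim (X j), kdim (X j.+1))),
      [/\ X 0%N = K, complex_hom d, row_free (d 0%N)
        & (forall j, projective (X j.+1) /\ (d j == kermx (d j.+1))%MS)]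
  end.

Definition ed_bound (C : subcat) (n : nat) : Prop :=
  exists T : mod, forall X, C X -> layer T n.+1 X.

Definition ed (C : subcat) : nat_inf :=
  match excluded_middle_informative (exists n, ed_bound C n) with
  | left _ => Fin (epsilon (inhabits 0%N)
                  (fun n => ed_bound C n /\ forall m, ed_bound C m -> (n <= m)%N))
  | right _ => Inf
  end.

End Modules.

(* Over a group algebra every module M embeds, with a module as cokernel, into
   the free module Ind (Res M) induced from the trivial subgroup.  Splicing
   these embeddings puts every module in Omega^i, so both sides are the extension
   dimension of the whole module category.  If T bounds kP-mod, then Ind T bounds
   kG-mod: induction is exact and additive, and every kG-module M is a direct
   summand of Ind (Res M), since the trace map Ind (Res M) -> M divided by the
   index |G : P|, which is prime to p, splits M -> Ind (Res M).  Conversely every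
   kP-module N is a direct summand of Res (Ind N), so Res T bounds kP-mod. *)

From mathcomp Require Import all_boot all_order all_algebra all_fingroup all_solvable.
From mathcomp Require Import mxrepresentation.
From Stdlib Require Import FunctionalExtensionality PropExtensionality.
Set Implicit Arguments. Unset Strict Implicit. Unset Printing Implicit Defensive.
Import GRing.Theory.
Local Open Scope ring_scope.

Section ModuleCategory.
Variables (F : fieldType) (gT : finGroupType) (G : {group gT}).
Local Notation mod := (kmod F G).

Lemma is_hom_mul (M N L : mod) (f : 'M_(kdim M, kdim N)) (g : 'M_(kdim N, kdim L)) :
  is_hom f -> is_hom g -> is_hom (f *m g).
Proof. by move=> hf hg x Gx; rewrite mulmxA hf // -!mulmxA hg. Qed.

Lemma is_homZ (M N : mod) (a : F) (f : 'M_(kdim M, kdim N)) :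
  is_hom f -> is_hom (a *: f).
Proof. by move=> hf x Gx; rewrite -scalemxAr hf // scalemxAl. Qed.

Lemma is_hom0 (M N : mod) : is_hom (0 : 'M_(kdim M, kdim N)).
Proof. by move=> x Gx; rewrite mulmx0 mul0mx. Qed.

Lemma short_exactP (A X B : mod) f g :
  @short_exact F gT G A X B f g <->
  [/\ is_hom f, is_hom g, row_free f, row_full g &
      f *m g = 0 /\ kdim X = (kdim A + kdim B)%N].
Proof.
split.
  case=> hf hg rf rg /andP[fker kerf]; split => //; split; first exact/sub_kermxP.
  have := (mxrank_leqif_sup fker).2; rewrite kerf mxrank_ker (eqP rf) (eqP rg).
  by move=> /eqP ->; rewrite subnK // -(eqP rg) rank_leq_row.
case=> hf hg rf rg [/sub_kermxP fker dX]; split => //.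
by rewrite -(mxrank_leqif_eq fker) mxrank_ker (eqP rf) (eqP rg) dX addnK.
Qed.

Definition summand (X Y : mod) : Prop :=
  exists (f : 'M_(kdim X, kdim Y)) (g : 'M_(kdim Y, kdim X)),
    [/\ is_hom f, is_hom g & f *m g = 1%:M].

Lemma addC_summand (C : subcat F G) (X Y : mod) :
  summand X Y -> addC C Y -> addC C X.
Proof.
case=> f [g [hf hg fg]] [m [Z [fj [gj [hZ sumZ]]]]].
exists m, Z, (fun j => f *m fj j), (fun j => gj j *m g); split.
  by move=> j; case: (hZ j) => CZ hfj hgj; split => //; exact: is_hom_mul.
rewrite -fg -{2}[f]mulmx1 -sumZ mulmx_sumr mulmx_suml.
by apply: eq_bigr => j _; rewrite !mulmxA.
Qed.

Lemma layer_summand (T : mod) n (X Y : mod) :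
  summand X Y -> layer T n.+1 Y -> layer T n.+1 X.
Proof. by case: n => [|n]; apply: addC_summand. Qed.

End ModuleCategory.

Section ExactFunctor.
Variables (F : fieldType) (gT : finGroupType) (G1 G2 : {group gT}).
Variable Fo : kmod F G1 -> kmod F G2.
Variable Fm : forall M N : kmod F G1,
  'M[F]_(kdim M, kdim N) -> 'M[F]_(kdim (Fo M), kdim (Fo N)).
Hypothesis FmM : forall M N L (f : 'M_(kdim M, kdim N)) (g : 'M_(kdim N, kdim L)),
  Fm (f *m g) = Fm f *m Fm g.
Hypothesis Fm1 : forall M, Fm (1%:M : 'M_(kdim M)) = 1%:M.
Hypothesis FmD : forall M N (f g : 'M_(kdim M, kdim N)), Fm (f + g) = Fm f + Fm g.
Hypothesis Fm0 : forall M N, Fm (0 : 'M_(kdim M, kdim N)) = 0.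
Hypothesis Fm_hom : forall M N (f : 'M_(kdim M, kdim N)), is_hom f -> is_hom (Fm f).
Hypothesis Fm_exact : forall A X B f g, @short_exact F gT G1 A X B f g ->
  @short_exact F gT G2 (Fo A) (Fo X) (Fo B) (Fm f) (Fm g).
Hypothesis Fo0 : forall M, kdim M = 0%N -> kdim (Fo M) = 0%N.

Lemma addC_map (C : subcat F G1) (C' : subcat F G2) X :
  (forall Y, C Y -> C' (Fo Y)) -> addC C X -> addC C' (Fo X).
Proof.
move=> CC' [m [Y [f [g [hY sumY]]]]].
exists m, (fun j => Fo (Y j)), (fun j => Fm (f j)), (fun j => Fm (g j)); split.
  by move=> j; case: (hY j) => CY hf hg; split; [apply: CC' | apply: Fm_hom ..].
rewrite -Fm1 -sumY (big_morph (@Fm X X) (@FmD X X) (@Fm0 X X)).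
by apply: eq_bigr => j _; rewrite FmM.
Qed.

Lemma layer_map T n X : layer T n X -> layer (Fo T) n (Fo X).
Proof.
elim: n X => [|[|n] IH] X; first exact: Fo0.
  by apply: addC_map => Y ->.
apply: addC_map => Y [A [B [f [g [TA [TB exact_fg]]]]]].
exists (Fo A), (Fo B), (Fm f), (Fm g); split; last split.
- by apply: (addC_map (C := fun Y => Y = T)) TA => Z ->.
- exact: IH.
- exact: Fm_exact.
Qed.

End ExactFunctor.

Section Cosets.
Variables (gT : finGroupType) (G H : {group gT}).
Hypothesis sHG : H \subset G.
Local Notation idx := 'I_(#|G : H|)%g.

Lemma rcosets_self : (H : {set gT}) \in rcosets H G.
Proof. by apply/rcosetsP; exists 1%g; rewrite ?group1 ?rcoset1. Qed.

(* The right cosets of H in G are indexed by [idx]; [crep i] represents the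
   i-th one, [x] permutes them by [cact x], and
   [crep i * x = hcoc x i * crep (cact x i)] with [hcoc x i] in H. *)
Definition crep (i : idx) : gT := repr (enum_val i).
Definition cact (x : gT) (i : idx) : idx :=
  enum_rank_in rcosets_self (H :* (crep i * x))%g.
Definition hcoc (x : gT) (i : idx) : gT := (crep i * x * (crep (cact x i))^-1)%g.
Definition cidx1 : idx := enum_rank_in rcosets_self (H : {set gT}).

Lemma enum_val_rcoset (i : idx) : exists2 y, y \in G & enum_val i = (H :* y)%g.
Proof. exact/rcosetsP/enum_valP. Qed.

Lemma rcoset_crep i : (H :* crep i)%g = enum_val i.
Proof. by rewrite /crep; case: (enum_val_rcoset i) => y _ ->; rewrite rcoset_repr. Qed.

Lemma crepG i : crep i \in G.
Proof.
case: (enum_val_rcoset i) => y Gy e; rewrite /crep e.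
by case/rcosetP: (mem_repr_rcoset H y) => h Hh ->; rewrite groupM // (subsetP sHG).
Qed.

Lemma enum_val_cact x i : x \in G -> enum_val (cact x i) = (H :* (crep i * x))%g.
Proof.
move=> Gx; rewrite enum_rankK_in //.
by apply/rcosetsP; exists (crep i * x)%g; rewrite ?groupM ?crepG.
Qed.

Lemma hcocH x i : x \in G -> hcoc x i \in H.
Proof.
move=> Gx; have : (crep i * x)%g \in (H :* crep (cact x i))%g.
  by rewrite rcoset_crep enum_val_cact // rcoset_refl.
by case/rcosetP => h Hh e; rewrite /hcoc e mulgK.
Qed.

Lemma cact1 i : cact 1 i = i.
Proof. by rewrite /cact mulg1 rcoset_crep enum_valK_in. Qed.

Lemma hcoc1 i : hcoc 1 i = 1%g.
Proof. by rewrite /hcoc cact1 mulg1 mulgV. Qed.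

Lemma cactM x y i : x \in G -> y \in G -> cact (x * y) i = cact y (cact x i).
Proof.
move=> Gx Gy; rewrite {1}/cact; congr (enum_rank_in _ _).
by rewrite [in RHS]rcosetM rcoset_crep enum_val_cact // -rcosetM mulgA.
Qed.

Lemma hcocM x y i : x \in G -> y \in G ->
  hcoc (x * y) i = (hcoc x i * hcoc y (cact x i))%g.
Proof. by move=> Gx Gy; rewrite /hcoc cactM // !mulgA mulgKV. Qed.

Lemma cactKV x : x \in G -> cancel (cact x^-1) (cact x).
Proof. by move=> Gx i; rewrite -cactM ?groupV // mulVg cact1. Qed.

Lemma cactK x : x \in G -> cancel (cact x) (cact x^-1).
Proof. by move=> Gx i; rewrite -cactM ?groupV // mulgV cact1. Qed.

Lemma crep_cidx1 : crep cidx1 = 1%g.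
Proof. by rewrite /crep enum_rankK_in ?rcosets_self // repr_group. Qed.

Lemma cact_cidx1 x : x \in H -> cact x cidx1 = cidx1.
Proof. by move=> Hx; rewrite /cact crep_cidx1 mul1g rcoset_id. Qed.

Lemma hcoc_cidx1 x : x \in H -> hcoc x cidx1 = x.
Proof. by move=> Hx; rewrite /hcoc cact_cidx1 // crep_cidx1 mul1g invg1 mulg1. Qed.

End Cosets.

Lemma mx1_mxblock (F : fieldType) (m k : nat) :
  (1%:M : 'M[F]_(\sum_(i < m) k)) =
  @mxblock _ m m (fun _ => k) (fun _ => k) (fun i j => if i == j then 1%:M else 0).
Proof.
rewrite -(mxdiagZ (p_ := fun _ => k) 1) /mxdiag; apply: eq_mxblock => i j.
by case: eqP => // _; rewrite conform_mx_id.
Qed.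

Section Induction.
Variables (F : fieldType) (gT : finGroupType) (G H : {group gT}).
Hypothesis sHG : H \subset G.
Local Notation m := (#|G : H|)%g.
Local Notation cact := (@cact gT G H).
Local Notation hcoc := (@hcoc gT G H).

Section IndModule.
Variable N : kmod F H.

Definition ind_mx (x : gT) : 'M[F]_(\sum_(i < m) kdim N) :=
  @mxblock _ m m (fun _ => kdim N) (fun _ => kdim N)
    (fun i j => if j == cact x i then krep N (hcoc x i) else 0).

Lemma ind_mx_repr : mx_repr G ind_mx.
Proof.
split.
  rewrite mx1_mxblock /ind_mx; apply: eq_mxblock => i j.
  by rewrite cact1 hcoc1 repr_mx1 eq_sym.
move=> x y Gx Gy; rewrite /ind_mx mul_mxblock; apply: eq_mxblock => i k.
rewrite (bigD1 (cact x i)) //= big1 ?addr0 => [|j /negbTE ->]; last by rewrite mul0mx.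
rewrite eqxx -(cactM sHG) // (hcocM sHG) // repr_mxM ?(hcocH sHG) //.
by case: eqP; rewrite ?mulmx0.
Qed.

Definition Ind : kmod F G := KMod _ (MxRepresentation ind_mx_repr).

End IndModule.

Definition ind_hom (M N : kmod F H) (f : 'M[F]_(kdim M, kdim N)) :
  'M[F]_(kdim (Ind M), kdim (Ind N)) :=
  @mxblock _ m m (fun _ => kdim M) (fun _ => kdim N) (fun i j => if i == j then f else 0).

Lemma ind_homM (M N L : kmod F H) (f : 'M_(kdim M, kdim N)) (g : 'M_(kdim N, kdim L)) :
  ind_hom (f *m g) = ind_hom f *m ind_hom g.
Proof.
rewrite /ind_hom mul_mxblock; apply: eq_mxblock => i k.
rewrite (bigD1 i) //= big1 ?addr0 => [|j /negbTE]; last first.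
  by rewrite eq_sym => ->; rewrite mul0mx.
by rewrite eqxx; case: eqP; rewrite ?mulmx0.
Qed.

Lemma ind_hom1 (M : kmod F H) : ind_hom (1%:M : 'M_(kdim M)) = 1%:M.
Proof. by rewrite mx1_mxblock. Qed.

Lemma ind_homD (M N : kmod F H) (f g : 'M_(kdim M, kdim N)) :
  ind_hom (f + g) = ind_hom f + ind_hom g.
Proof. by rewrite /ind_hom -mxblockD; apply: eq_mxblock => i j; case: eqP; rewrite ?addr0. Qed.

Lemma ind_hom0 (M N : kmod F H) : ind_hom (0 : 'M_(kdim M, kdim N)) = 0.
Proof. by rewrite /ind_hom -mxblock0; apply: eq_mxblock => i j; case: eqP. Qed.

Lemma is_hom_ind (M N : kmod F H) (f : 'M_(kdim M, kdim N)) :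
  is_hom f -> is_hom (ind_hom f).
Proof.
move=> hf x Gx /=; rewrite /ind_mx /ind_hom !mul_mxblock; apply: eq_mxblock => i k.
rewrite (bigD1 (cact x i)) //= big1 ?addr0 => [|j /negbTE ->]; last by rewrite mul0mx.
rewrite [in RHS](bigD1 i) //= big1 ?addr0 => [|j /negbTE ji]; last first.
  by rewrite eq_sym ji mul0mx.
by rewrite !eqxx; case: (eqVneq (cact x i) k) => _; rewrite ?mulmx0 // hf ?(hcocH sHG).
Qed.

Lemma short_exact_ind A X B f g : @short_exact F gT H A X B f g ->
  @short_exact F gT G (Ind A) (Ind X) (Ind B) (ind_hom f) (ind_hom g).
Proof.
case/short_exactP => hf hg rf rg [fg dX].
have [f' ff'] := row_freeP rf; have [g' g'g] := row_fullP rg.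
apply/short_exactP; split; try exact: is_hom_ind.
- by apply/row_freeP; exists (ind_hom f'); rewrite -ind_homM ff' ind_hom1.
- by apply/row_fullP; exists (ind_hom g'); rewrite -ind_homM g'g ind_hom1.
by rewrite -ind_homM fg ind_hom0 /= dX big_split.
Qed.

Lemma layer_Ind (T : kmod F H) n X : layer T n X -> layer (Ind T) n (Ind X).
Proof.
apply: (layer_map (Fm := ind_hom)).
- exact: ind_homM.
- exact: ind_hom1.
- exact: ind_homD.
- exact: ind_hom0.
- exact: is_hom_ind.
- exact: short_exact_ind.
- by move=> M dM0; rewrite /= dM0 big1.
Qed.

Definition Res (M : kmod F G) : kmod F H := KMod (kdim M) (subg_repr (krep M) sHG).

Lemma is_hom_res (M N : kmod F G) (f : 'M_(kdim M, kdim N)) :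
  is_hom f -> is_hom (f : 'M_(kdim (Res M), kdim (Res N))).
Proof. by move=> hf x Hx; apply: hf; apply: (subsetP sHG). Qed.

Lemma layer_Res (T : kmod F G) n X : layer T n X -> layer (Res T) n (Res X).
Proof.
apply: (@layer_map F gT G H Res (fun M N f => f)) => //.
- exact: is_hom_res.
- move=> A X' B f g /short_exactP[hf hg rf rg fg]; apply/short_exactP.
  by split => //; apply: is_hom_res.
Qed.

End Induction.

Section Summands.
Variables (F : fieldType) (gT : finGroupType) (G H : {group gT}).
Hypothesis sHG : H \subset G.
Local Notation m := (#|G : H|)%g.
Local Notation cact := (@cact gT G H).
Local Notation hcoc := (@hcoc gT G H).
Local Notation crep := (@crep gT G H).
Local Notation cidx1 := (@cidx1 gT G H).
Local Notation Ind := (Ind (F := F) sHG).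
Local Notation Res := (Res (F := F) sHG).

Section IndRes.
Variable M : kmod F G.
Local Notation rho := (krep M).

Definition ind_res_in : 'M[F]_(kdim M, kdim (Ind (Res M))) :=
  @mxrow _ m (fun _ => kdim M) (kdim M) (fun j => rho (crep j)^-1%g).

Definition ind_res_out : 'M[F]_(kdim (Ind (Res M)), kdim M) :=
  @mxcol _ m (fun _ => kdim M) (kdim M) (fun i => rho (crep i)).

Lemma is_hom_ind_res_in : is_hom ind_res_in.
Proof.
move=> x Gx /=; rewrite /ind_res_in /ind_mx mul_mxrow mul_mxrow_mxblock.
apply: eq_mxrow => k; rewrite (bigD1 (cact x^-1 k)) //= big1 ?addr0 => [|j ne]; last first.
  by rewrite eq_sym (canF_eq (cactK sHG Gx)) (negbTE ne) mulmx0.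
rewrite (cactKV sHG) // eqxx -repr_mxM ?groupV ?(crepG sHG) // -repr_mxM;
  [|by rewrite groupV (crepG sHG) | by rewrite (subsetP sHG) ?(hcocH sHG)].
by rewrite /hcoc (cactKV sHG) // !mulgA mulVg mul1g.
Qed.

Lemma is_hom_ind_res_out : is_hom ind_res_out.
Proof.
move=> x Gx /=; rewrite /ind_res_out /ind_mx mul_mxblock_mxrow mxcol_mul.
apply: eq_mxcol => i; rewrite (bigD1 (cact x i)) //= big1 ?addr0 => [|j /negbTE ->]; last first.
  by rewrite mul0mx.
rewrite eqxx -repr_mxM ?(crepG sHG) //; last by rewrite (subsetP sHG) ?(hcocH sHG).
by rewrite /hcoc mulgKV repr_mxM ?(crepG sHG).
Qed.

Lemma mul_ind_res_in_out : ind_res_in *m ind_res_out = m%:R *: 1%:M.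
Proof.
rewrite /ind_res_in /ind_res_out mul_mxrow_mxcol (eq_bigr (fun _ => 1%:M)).
  by rewrite sumr_const card_ord scaler_nat.
by move=> i _; rewrite -repr_mxM ?groupV ?(crepG sHG) // mulVg repr_mx1.
Qed.

Lemma ind_res_in_free : row_free ind_res_in.
Proof.
apply/row_freeP; exists (@mxcol _ m (fun _ => kdim M) (kdim M)
  (fun i => if i == cidx1 then rho (crep i) else 0)).
rewrite mul_mxrow_mxcol (bigD1 cidx1) //= big1 ?addr0 => [|j /negbTE ->]; last first.
  by rewrite mulmx0.
by rewrite eqxx -repr_mxM ?groupV ?(crepG sHG) // mulVg repr_mx1.
Qed.

End IndRes.

Lemma summand_ind_res (M : kmod F G) : (m%:R : F) != 0 -> summand M (Ind (Res M)).
Proof.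
move=> m_nz; exists (ind_res_in M), (m%:R^-1 *: ind_res_out M); split.
- exact: is_hom_ind_res_in.
- exact/is_homZ/is_hom_ind_res_out.
by rewrite -scalemxAr mul_ind_res_in_out scalerA mulVf // scale1r.
Qed.

Section ResInd.
Variable N : kmod F H.

Definition res_ind_in : 'M[F]_(kdim N, kdim (Res (Ind N))) :=
  @mxrow _ m (fun _ => kdim N) (kdim N) (fun j => if j == cidx1 then 1%:M else 0).

Definition res_ind_out : 'M[F]_(kdim (Res (Ind N)), kdim N) :=
  @mxcol _ m (fun _ => kdim N) (kdim N) (fun i => if i == cidx1 then 1%:M else 0).

Lemma is_hom_res_ind_in : is_hom res_ind_in.
Proof.
move=> x Hx /=; rewrite /res_ind_in /ind_mx mul_mxrow mul_mxrow_mxblock.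
apply: eq_mxrow => k; rewrite (bigD1 cidx1) //= big1 ?addr0 => [|j /negbTE ->]; last first.
  by rewrite mul0mx.
rewrite eqxx mul1mx cact_cidx1 // hcoc_cidx1 //.
by case: eqP; rewrite ?mulmx1 ?mulmx0.
Qed.

Lemma is_hom_res_ind_out : is_hom res_ind_out.
Proof.
move=> x Hx /=; have Gx := subsetP sHG x Hx.
rewrite /res_ind_out /ind_mx mul_mxblock_mxrow mxcol_mul.
apply: eq_mxcol => i; rewrite (bigD1 (cact x i)) //= big1 ?addr0 => [|j /negbTE ->]; last first.
  by rewrite mul0mx.
rewrite eqxx (canF_eq (cactK sHG Gx)) cact_cidx1 ?groupV //.
by case: eqP => [->|_]; rewrite ?mulmx1 ?mul1mx ?hcoc_cidx1 ?mulmx0 ?mul0mx.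
Qed.

Lemma mul_res_ind_in_out : res_ind_in *m res_ind_out = 1%:M.
Proof.
rewrite /res_ind_in /res_ind_out mul_mxrow_mxcol (bigD1 cidx1) //= big1 ?addr0.
  by rewrite eqxx mulmx1.
by move=> j /negbTE ->; rewrite mul0mx.
Qed.

End ResInd.

Lemma summand_res_ind (N : kmod F H) : summand N (Res (Ind N)).
Proof.
exists (res_ind_in N), (res_ind_out N); split.
- exact: is_hom_res_ind_in.
- exact: is_hom_res_ind_out.
- exact: mul_res_ind_in_out.
Qed.

End Summands.

Section FreeModules.
Variables (F : fieldType) (gT : finGroupType) (G : {group gT}).
Local Notation s1G := (sub1G G).
Local Notation m := (#|G : 1|)%g.
Local Notation cact := (@cact gT G 1%G).
Local Notation crep := (@crep gT G 1%G).
Local Notation hcoc := (@hcoc gT G 1%G).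

Lemma hcoc_sub1 x i : x \in G -> hcoc x i = 1%g.
Proof. by move=> Gx; apply/set1P; apply: (hcocH s1G). Qed.

Lemma crep_cact_sub1 x i : x \in G -> crep (cact x i) = (crep i * x)%g.
Proof. by move=> Gx; have /eqP := hcoc_sub1 i Gx; rewrite -eq_mulgV1 => /eqP. Qed.

(* Each block of the induced module is a translate of the block of the trivial
   coset: lift [h] there along a linear section [g'] of [g] and translate back. *)
Lemma projective_ind_sub1 (N : kmod F 1%G) : projective (Ind (F := F) s1G N).
Proof.
move=> X Y g h homg /row_fullP[g' g'g] homh.
pose hb := @submxcol _ m (fun _ => kdim N) _ h.
have hbJ x i : x \in G -> hb (cact x i) = hb i *m krep Y x.
  move=> Gx; have := homh x Gx.
  rewrite -(submxcolK h) /= /ind_mx mul_mxblock_mxrow mxcol_mul.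
  move/eq_mxcolP => /(_ i).
  rewrite (bigD1 (cact x i)) //= big1 ?addr0 => [|j /negbTE ->]; last by rewrite mul0mx.
  by rewrite eqxx hcoc_sub1 // repr_mx1 mul1mx.
exists (@mxcol _ m (fun _ => kdim N) (kdim X)
  (fun i => hb i *m krep Y (crep i)^-1%g *m g' *m krep X (crep i))); split.
  move=> x Gx /=; rewrite /ind_mx mul_mxblock_mxrow mxcol_mul.
  apply: eq_mxcol => i; rewrite (bigD1 (cact x i)) //= big1 ?addr0 => [|j /negbTE ->].
    rewrite eqxx hcoc_sub1 // repr_mx1 mul1mx hbJ // crep_cact_sub1 //.
    by rewrite invMg !repr_mxM ?groupV ?(crepG s1G) // !mulmxA repr_mxK.
  by rewrite mul0mx.
rewrite mxcol_mul -[RHS](submxcolK h); apply: eq_mxcol => i.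
rewrite -mulmxA homg ?(crepG s1G) // mulmxA -(mulmxA _ g') g'g mulmx1.
by rewrite -mulmxA -repr_mxM ?groupV ?(crepG s1G) // mulVg repr_mx1 mulmx1.
Qed.

End FreeModules.

Section Cokernel.
Variables (F : fieldType) (gT : finGroupType) (G : {group gT}).
Variables (M Q : kmod F G) (e : 'M[F]_(kdim M, kdim Q)).
Hypothesis he : is_hom e.

Lemma mxmodule_img : mxmodule (krep Q) (genmx e).
Proof. by apply/mxmoduleP => x Gx; rewrite genmxE (eqmxMr _ (genmxE e)) -he // submxMl. Qed.

Definition Cok : kmod F G := KMod _ (factmod_repr mxmodule_img).
Definition cokm : 'M[F]_(kdim Q, kdim Cok) := in_factmod (genmx e) 1%:M.

Lemma is_hom_cokm : is_hom cokm.
Proof.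
move=> x Gx /=; rewrite /cokm -in_factmodE -[krep Q x]mul1mx.
by rewrite (in_factmodJ mxmodule_img).
Qed.

Lemma cokm_full : row_full cokm.
Proof. by apply/row_fullP; exists (val_factmod 1%:M); rewrite /cokm -in_factmodE val_factmodK. Qed.

Lemma cokm_ker : (e == kermx cokm)%MS.
Proof.
apply/andP; split.
  apply/sub_kermxP; rewrite /cokm -in_factmodE; apply/eqP.
  by rewrite in_factmod_eq0 genmxE.
by rewrite -(genmxE e) -in_factmod_eq0 in_factmodE mulmx_ker.
Qed.

End Cokernel.

Lemma kermxMfree (F : fieldType) m n p (A : 'M[F]_(m, n)) (B : 'M[F]_(n, p)) :
  row_free B -> (kermx (A *m B) == kermx A)%MS.
Proof.
move=> freeB; apply/andP; split.
  by rewrite sub_kermx -(mulmx_free_eq0 _ freeB) -mulmxA -sub_kermx.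
by rewrite sub_kermx mulmxA mulmx_ker mul0mx.
Qed.

Section Splice.
Variables (F : fieldType) (gT : finGroupType) (G : {group gT}).
Local Notation mod := (kmod F G).
Variables (K E : nat -> mod).
Variable e : forall j, 'M[F]_(kdim (K j), kdim (E j)).
Variable c : forall j, 'M[F]_(kdim (E j), kdim (K j.+1)).
Hypotheses (e_hom : forall j, is_hom (e j)) (c_hom : forall j, is_hom (c j)).
Hypotheses (e_free : forall j, row_free (e j)) (c_full : forall j, row_full (c j)).
Hypothesis e_ker : forall j, (e j == kermx (c j))%MS.
Hypothesis E_proj : forall j, projective (E j).

(* Splicing the sequences [0 -> K j -> E j -> K j.+1 -> 0]; position [j.+1]
   holds [E j] when [b] is true and [K j] otherwise. *)
Definition stage (b : bool) j : mod := if b then E j else K j.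

Definition link (b1 b2 : bool) j : 'M[F]_(kdim (stage b1 j), kdim (stage b2 j.+1)) :=
  match b1, b2 return 'M[F]_(kdim (stage b1 j), kdim (stage b2 j.+1)) with
  | true, true => c j *m e j.+1
  | true, false => c j
  | false, _ => 0
  end.

Definition link0 (b : bool) : 'M[F]_(kdim (K 0), kdim (stage b 0)) :=
  match b return 'M[F]_(kdim (K 0), kdim (stage b 0)) with
  | true => e 0
  | false => 0
  end.

Lemma is_hom_link b1 b2 j : is_hom (link b1 b2 j).
Proof.
case: b1; case: b2 => /=; try exact: is_hom0; try exact: c_hom.
exact: is_hom_mul.
Qed.

Lemma is_hom_link0 b : is_hom (link0 b).
Proof. by case: b; [apply: e_hom | apply: is_hom0]. Qed.

Lemma e_ker_link b j : (e j == kermx (link true b j))%MS.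
Proof.
case: b; last exact: e_ker.
exact/eqmxP/(eqmx_trans (eqmxP (e_ker j)))/eqmx_sym/eqmxP/kermxMfree.
Qed.

Lemma link_ker (b1 b2 b3 : bool) j : b1 -> (link b1 b2 j == kermx (link b2 b3 j.+1))%MS.
Proof.
case: b1 => // _; case: b2 => /=.
  exact/eqmxP/(eqmx_trans (eqmxMfull _ (c_full j)))/eqmxP/e_ker_link.
by apply/andP; split; rewrite kermx0 ?submx1 // sub1mx.
Qed.

Lemma link_full (b1 b2 : bool) j : b1 -> ~~ b2 -> row_full (link b1 b2 j).
Proof. by case: b1; case: b2. Qed.

Lemma stage_projective (b : bool) j : b -> projective (stage b j).
Proof. by case: b. Qed.

Section Spliced.
Variable beta : nat -> bool.
Hypothesis betaSK : forall j, beta j.+1 -> beta j.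

Definition spliced j : mod := if j is j'.+1 then stage (beta j') j' else K 0.

Definition spliced_d j : 'M[F]_(kdim (spliced j), kdim (spliced j.+1)) :=
  match j return 'M[F]_(kdim (spliced j), kdim (spliced j.+1)) with
  | 0 => link0 (beta 0)
  | j'.+1 => link (beta j') (beta j'.+1) j'
  end.

Lemma complex_hom_spliced : complex_hom spliced_d.
Proof. by case=> [|j]; [apply: is_hom_link0 | apply: is_hom_link]. Qed.

Lemma spliced_exact j : beta j ->
  projective (spliced j.+1) /\ (spliced_d j == kermx (spliced_d j.+1))%MS.
Proof.
move=> bj; split; first exact: stage_projective.
case: j bj => [|j] bj; last exact/link_ker/betaSK.
by rewrite /= bj; apply: e_ker_link.
Qed.

End Spliced.

Lemma Omega_spliced i : Omega i (K 0).
Proof.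
case: i => [[|n]|] //.
  have ltSK j : (j.+1 < n.+1 -> j < n.+1)%N by apply: ltnW.
  exists (spliced (fun j => j < n.+1)%N), (spliced_d _); split=> //.
  - exact: complex_hom_spliced.
  - exact: e_free.
  - by move=> j lt_jn; apply: spliced_exact.
  - by apply: link_full; rewrite ?ltnn.
exists (spliced (fun => true)), (spliced_d _); split=> //.
- exact: complex_hom_spliced.
- exact: e_free.
- by move=> j; apply: spliced_exact.
Qed.

End Splice.

Section EveryModuleIsASyzygy.
Variables (F : fieldType) (gT : finGroupType) (G : {group gT}).
Local Notation s1G := (sub1G G).
Local Notation free_hull M := (Ind (F := F) s1G (Res s1G M)).

Fixpoint cosyzygy (M : kmod F G) j : kmod F G :=
  if j is j'.+1 then Cok (is_hom_ind_res_in s1G (cosyzygy M j')) else M.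

Lemma in_Omega i (M : kmod F G) : Omega i M.
Proof.
apply: (@Omega_spliced _ _ _ (cosyzygy M) (fun j => free_hull (cosyzygy M j))
  (fun j => ind_res_in s1G (cosyzygy M j))
  (fun j => cokm (is_hom_ind_res_in s1G (cosyzygy M j)))).
- by move=> j; apply: is_hom_ind_res_in.
- by move=> j; apply: is_hom_cokm.
- by move=> j; apply: ind_res_in_free.
- by move=> j; apply: cokm_full.
- by move=> j; apply: cokm_ker.
- by move=> j; apply: projective_ind_sub1.
Qed.

End EveryModuleIsASyzygy.

Lemma eq_ed (F : fieldType) (gT : finGroupType) (G1 G2 : {group gT})
  (C1 : subcat F G1) (C2 : subcat F G2) :
  (forall n, ed_bound C1 n <-> ed_bound C2 n) -> ed C1 = ed C2.
Proof.
move=> eqC; rewrite /ed (_ : ed_bound C1 = ed_bound C2) //.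
by apply: functional_extensionality => n; apply: propositional_extensionality.
Qed.

Theorem corollary5 (F : fieldType) (gT : finGroupType) (G P : {group gT})
  (p : nat) (charFp : p \in [pchar F]%R) (sylP : (p.-Sylow(G) P)%g) (i : nat_inf) :
  ed (Omega (F := F) (G := P) i) = ed (Omega (F := F) (G := G) i).
Proof.
have sPG : P \subset G := pHall_sub sylP.
have index_nz : ((#|G : P|)%g%:R : F) != 0.
  rewrite -(dvdn_pcharf charFp) -(p'natE _ (pcharf_prime charFp)).
  by case/and3P: sylP.
apply: eq_ed => n; split=> -[T boundT].
- exists (Ind sPG T) => M _; apply: layer_summand (summand_ind_res sPG M index_nz) _.
  by apply: layer_Ind; apply: boundT; apply: in_Omega.
- exists (Res sPG T) => N _; apply: layer_summand (summand_res_ind sPG N) _.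
  by apply: layer_Res; apply: boundT; apply: in_Omega.
Qed.
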